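(* Let $\alpha,\beta,\gamma,\delta\ge0$ with $\alpha+\beta+\gamma+\delta=1$, $\beta>0$, $\delta>0$, $\alpha+\gamma>0$. Put $\xi:=\alpha+\beta$, $D:=4\beta\delta+(2\xi-1)^2$, $\mu:=\frac{1-\sqrt D}{2}$. Then $$h(\mu)\ \ge\ h(\xi)-(\beta+\delta)\,h\Bigl(\frac{\beta}{\beta+\delta}\Bigr).$$
   Context: $h(t)=-t\log t-(1-t)\log(1-t)$ is the binary entropy function on $[0,1]$. *)

From Stdlib Require Import Reals.
Open Scope R_scope.

Definition xlogx (t : R) : R := if Req_EM_T t 0 then 0 else t * ln t.

Definition h (t : R) : R := - xlogx t - xlogx (1 - t).

From Stdlib Require Import Reals Lra.
From Coquelicot Require Import Coquelicot.
Open Scope R_scope.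

(* Parametrise the entropy by the Bernoulli variance v = t(1-t): h t = hvar (t(1-t))
   for a function hvar on [0, 1/4].  Two monotonicity facts, hvar v / v nonincreasing
   and hvar v ^ 2 / v nondecreasing, make hvar subadditive and give
   hvar (s^2 v) <= s hvar v for 0 <= s <= 1.  Now mu(1-mu) = xi(1-xi) - beta delta and
   beta delta = (beta+delta)^2 p(1-p) with p = beta/(beta+delta), so
   h xi = hvar (mu(1-mu) + beta delta) <= h mu + hvar (beta delta) <= h mu + (beta+delta) h p. *)

Lemma nondecreasing_of_derive_nonneg (f df : R -> R) (a b x y : R) :
  a < x -> x <= y -> y < b ->
  (forall z, a < z < b -> is_derive f z (df z)) ->
  (forall z, x <= z <= y -> 0 <= df z) -> f x <= f y.
Proof.
  intros Hax Hxy Hyb Hd Hpos.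
  destruct (Req_dec x y) as [->|Hne]; [lra|].
  destruct (MVT_gen f x y df) as [c [Hc Heq]];
    rewrite ?Rmin_left, ?Rmax_right in * by lra.
  - intros z Hz. apply Hd. lra.
  - intros z Hz. apply continuity_pt_filterlim, (ex_derive_continuous (V := R_NormedModule)).
    exists (df z). apply Hd. lra.
  - assert (0 <= df c * (y - x)) by (apply Rmult_le_pos; [apply Hpos|]; lra). lra.
Qed.

Lemma ln_le_sub1 t : 0 < t -> ln t <= t - 1.
Proof. intros Ht. pose proof (exp_ineq1_le (ln t)). rewrite exp_ln in *; lra. Qed.

Lemma sub1_le_mul_ln t : 0 < t -> t - 1 <= t * ln t.
Proof.
  intros Ht. pose proof (ln_le_sub1 (/ t) (Rinv_0_lt_compat _ Ht)) as Hinv.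
  rewrite ln_Rinv in Hinv by lra.
  apply Rmult_le_compat_l with (r := t) in Hinv; [|lra].
  rewrite Rmult_minus_distr_l, Rinv_r in Hinv by lra. lra.
Qed.

Lemma ln_div_compl_le x y : 0 < x -> x <= y -> y < 1 -> ln x / (1 - x) <= ln y / (1 - y).
Proof.
  intros Hx Hxy Hy.
  apply (nondecreasing_of_derive_nonneg (fun t => ln t / (1 - t))
     (fun t => (1 - t + t * ln t) / (t * (1 - t) ^ 2)) 0 1); try lra.
  - intros z Hz. auto_derive; [lra|]. field. lra.
  - intros z Hz. pose proof (sub1_le_mul_ln z).
    apply Rdiv_le_0_compat; [lra|]. apply Rmult_lt_0_compat, pow_lt; lra.
Qed.

Lemma xlnx_div_compl_ge x y : 0 < x -> x <= y -> y < 1 ->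
  y * ln y / (1 - y) <= x * ln x / (1 - x).
Proof.
  intros Hx Hxy Hy.
  enough (- (x * ln x) / (1 - x) <= - (y * ln y) / (1 - y)) by (unfold Rdiv in *; lra).
  apply (nondecreasing_of_derive_nonneg (fun t => - (t * ln t) / (1 - t))
     (fun t => (t - 1 - ln t) / (1 - t) ^ 2) 0 1); try lra.
  - intros z Hz. auto_derive; [lra|]. field. lra.
  - intros z Hz. pose proof (ln_le_sub1 z).
    apply Rdiv_le_0_compat; [lra|]. apply pow_lt; lra.
Qed.

Lemma xlnx_le_compl t : 0 < t <= 1/2 -> t * ln t <= (1 - t) * ln (1 - t).
Proof.
  intros Ht. pose proof (ln_div_compl_le t (1 - t) ltac:(lra) ltac:(lra) ltac:(lra)) as Hle.
  replace (1 - (1 - t)) with t in Hle by ring.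
  replace (t * ln t) with (t * (1 - t) * (ln t / (1 - t))) by (field; lra).
  replace ((1 - t) * ln (1 - t)) with (t * (1 - t) * (ln (1 - t) / t)) by (field; lra).
  apply Rmult_le_compat_l; [nra | exact Hle].
Qed.

Lemma sqr_ln_compl_le t : 0 < t <= 1/2 -> (1 - t) ^ 2 * ln (1 - t) <= t ^ 2 * ln t.
Proof.
  intros Ht. pose proof (xlnx_div_compl_ge t (1 - t) ltac:(lra) ltac:(lra) ltac:(lra)) as Hle.
  replace (1 - (1 - t)) with t in Hle by ring.
  replace (t ^ 2 * ln t) with (t * (1 - t) * (t * ln t / (1 - t))) by (field; lra).
  replace ((1 - t) ^ 2 * ln (1 - t)) with (t * (1 - t) * ((1 - t) * ln (1 - t) / t))
    by (field; lra).
  apply Rmult_le_compat_l; [nra | exact Hle].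
Qed.

Definition hln (t : R) : R := - (t * ln t) - (1 - t) * ln (1 - t).

Lemma hln_nonneg t : 0 < t < 1 -> 0 <= hln t.
Proof.
  intros Ht. unfold hln.
  pose proof (ln_le_sub1 t). pose proof (ln_le_sub1 (1 - t)).
  assert (0 <= t * - ln t) by (apply Rmult_le_pos; lra).
  assert (0 <= (1 - t) * - ln (1 - t)) by (apply Rmult_le_pos; lra).
  lra.
Qed.

Lemma hln_div_var_antitone t1 t2 : 0 < t1 -> t1 <= t2 -> t2 <= 1/2 ->
  hln t2 / (t2 * (1 - t2)) <= hln t1 / (t1 * (1 - t1)).
Proof.
  intros H1 H12 H2.
  enough (- (hln t1 / (t1 * (1 - t1))) <= - (hln t2 / (t2 * (1 - t2)))) by lra.
  apply (nondecreasing_of_derive_nonneg (fun t => - (hln t / (t * (1 - t))))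
     (fun t => (t ^ 2 * ln t - (1 - t) ^ 2 * ln (1 - t)) / (t * (1 - t)) ^ 2) 0 1); try lra.
  - intros z Hz. unfold hln. auto_derive.
    + repeat split; try lra. apply Rgt_not_eq, Rmult_lt_0_compat; lra.
    + replace (1 + - z) with (1 - z) by ring. field. lra.
  - intros z Hz. pose proof (sqr_ln_compl_le z ltac:(lra)).
    apply Rdiv_le_0_compat; [lra|]. apply pow_lt, Rmult_lt_0_compat; lra.
Qed.

Lemma hln_sqr_div_var_monotone t1 t2 : 0 < t1 -> t1 <= t2 -> t2 <= 1/2 ->
  hln t1 ^ 2 / (t1 * (1 - t1)) <= hln t2 ^ 2 / (t2 * (1 - t2)).
Proof.
  intros H1 H12 H2.
  apply (nondecreasing_of_derive_nonneg (fun t => hln t ^ 2 / (t * (1 - t)))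
     (fun t => hln t * ((1 - t) * ln (1 - t) - t * ln t) / (t * (1 - t)) ^ 2) 0 1); try lra.
  - intros z Hz. unfold hln. auto_derive.
    + repeat split; try lra. apply Rgt_not_eq, Rmult_lt_0_compat; lra.
    + replace (1 + - z) with (1 - z) by ring. field. lra.
  - intros z Hz. pose proof (xlnx_le_compl z ltac:(lra)).
    apply Rdiv_le_0_compat.
    + apply Rmult_le_pos; [apply hln_nonneg|]; lra.
    + apply pow_lt, Rmult_lt_0_compat; lra.
Qed.

Lemma h_hln t : 0 < t < 1 -> h t = hln t.
Proof.
  intros Ht. unfold h, hln, xlogx.
  destruct (Req_EM_T t 0); [lra|]. destruct (Req_EM_T (1 - t) 0); [lra|]. ring.
Qed.

Lemma h_0 : h 0 = 0.
Proof.
  unfold h, xlogx. destruct (Req_EM_T 0 0); [|lra].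
  rewrite Rminus_0_r. destruct (Req_EM_T 1 0); [lra|]. rewrite ln_1. ring.
Qed.

Lemma h_compl t : h (1 - t) = h t.
Proof. unfold h. replace (1 - (1 - t)) with t by ring. ring. Qed.

Lemma h_nonneg t : 0 <= t < 1 -> 0 <= h t.
Proof.
  intros Ht. destruct (Req_dec t 0) as [->|Hne]; [rewrite h_0; lra|].
  rewrite h_hln by lra. apply hln_nonneg. lra.
Qed.

(* The root in [0, 1/2] of t (1 - t) = q. *)
Definition half_root (q : R) : R := (1 - sqrt (1 - 4 * q)) / 2.

Lemma half_root_0 : half_root 0 = 0.
Proof. unfold half_root. rewrite Rmult_0_r, Rminus_0_r, sqrt_1. field. Qed.

Lemma half_root_range q : 0 <= q <= 1/4 -> 0 <= half_root q <= 1/2.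
Proof.
  intros Hq. unfold half_root.
  pose proof (sqrt_pos (1 - 4 * q)). pose proof (pow2_sqrt (1 - 4 * q) ltac:(lra)).
  nra.
Qed.

Lemma half_root_gt0 q : 0 < q <= 1/4 -> 0 < half_root q.
Proof.
  intros Hq. unfold half_root.
  pose proof (sqrt_pos (1 - 4 * q)). pose proof (pow2_sqrt (1 - 4 * q) ltac:(lra)).
  nra.
Qed.

Lemma half_root_le a b : 0 <= a -> a <= b -> b <= 1/4 -> half_root a <= half_root b.
Proof.
  intros Ha Hab Hb. unfold half_root.
  pose proof (sqrt_le_1_alt (1 - 4 * b) (1 - 4 * a) ltac:(lra)). lra.
Qed.

Lemma half_root_spec q : 0 <= q <= 1/4 -> half_root q * (1 - half_root q) = q.
Proof.
  intros Hq. unfold half_root. pose proof (pow2_sqrt (1 - 4 * q) ltac:(lra)). nra.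
Qed.

Lemma half_root_var t : 0 <= t <= 1/2 -> half_root (t * (1 - t)) = t.
Proof.
  intros Ht. unfold half_root.
  replace (1 - 4 * (t * (1 - t))) with ((1 - 2 * t) ^ 2) by ring.
  rewrite sqrt_pow2 by lra. field.
Qed.

Definition hvar (q : R) : R := h (half_root q).

Lemma hvar_0 : hvar 0 = 0.
Proof. unfold hvar. rewrite half_root_0. exact h_0. Qed.

Lemma hvar_nonneg q : 0 <= q <= 1/4 -> 0 <= hvar q.
Proof. intros Hq. apply h_nonneg. pose proof (half_root_range q Hq). lra. Qed.

Lemma h_hvar t : 0 <= t <= 1 -> h t = hvar (t * (1 - t)).
Proof.
  intros Ht. unfold hvar. destruct (Rle_or_lt t (1/2)).
  - rewrite half_root_var; [reflexivity | lra].
  - replace (t * (1 - t)) with ((1 - t) * (1 - (1 - t))) by ring.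
    rewrite half_root_var by lra. symmetry. apply h_compl.
Qed.

Lemma hvar_div_antitone a c : 0 < a -> a <= c -> c <= 1/4 -> hvar c / c <= hvar a / a.
Proof.
  intros Ha Hac Hc.
  pose proof (half_root_gt0 a ltac:(lra)). pose proof (half_root_range c ltac:(lra)).
  pose proof (half_root_le a c ltac:(lra) Hac Hc).
  unfold hvar. rewrite !h_hln by lra.
  rewrite <- (half_root_spec a) at 2 by lra. rewrite <- (half_root_spec c) at 2 by lra.
  apply hln_div_var_antitone; lra.
Qed.

Lemma hvar_sqr_div_monotone a c : 0 < a -> a <= c -> c <= 1/4 ->
  hvar a ^ 2 / a <= hvar c ^ 2 / c.
Proof.
  intros Ha Hac Hc.
  pose proof (half_root_gt0 a ltac:(lra)). pose proof (half_root_range c ltac:(lra)).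
  pose proof (half_root_le a c ltac:(lra) Hac Hc).
  unfold hvar. rewrite !h_hln by lra.
  rewrite <- (half_root_spec a) at 2 by lra. rewrite <- (half_root_spec c) at 2 by lra.
  apply hln_sqr_div_var_monotone; lra.
Qed.

Lemma hvar_subadditive a b : 0 <= a -> 0 <= b -> a + b <= 1/4 ->
  hvar (a + b) <= hvar a + hvar b.
Proof.
  intros Ha Hb Hab.
  destruct (Req_dec a 0) as [->|Ha0]; [rewrite Rplus_0_l, hvar_0; lra|].
  destruct (Req_dec b 0) as [->|Hb0]; [rewrite Rplus_0_r, hvar_0; lra|].
  pose proof (hvar_div_antitone a (a + b) ltac:(lra) ltac:(lra) Hab) as Hda.
  pose proof (hvar_div_antitone b (a + b) ltac:(lra) ltac:(lra) Hab) as Hdb.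
  apply Rmult_le_compat_l with (r := a) in Hda; [|lra].
  apply Rmult_le_compat_l with (r := b) in Hdb; [|lra].
  replace (a * (hvar a / a)) with (hvar a) in Hda by (field; lra).
  replace (b * (hvar b / b)) with (hvar b) in Hdb by (field; lra).
  replace (hvar (a + b)) with (a * (hvar (a + b) / (a + b)) + b * (hvar (a + b) / (a + b)))
    by (field; lra).
  lra.
Qed.

Lemma hvar_scale s q : 0 <= s <= 1 -> 0 <= q <= 1/4 -> hvar (s ^ 2 * q) <= s * hvar q.
Proof.
  intros Hs Hq. pose proof (hvar_nonneg q Hq).
  assert (Hs2 : 0 <= s ^ 2 <= 1) by nra.
  destruct (Req_dec (s ^ 2 * q) 0) as [->|Hne]; [rewrite hvar_0; nra|].
  assert (0 < s) by nra. assert (0 < q) by nra.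
  pose proof (hvar_sqr_div_monotone (s ^ 2 * q) q ltac:(nra) ltac:(nra) ltac:(lra)) as Hmon.
  apply Rmult_le_compat_r with (r := s ^ 2 * q) in Hmon; [|nra].
  replace (hvar (s ^ 2 * q) ^ 2 / (s ^ 2 * q) * (s ^ 2 * q)) with (hvar (s ^ 2 * q) ^ 2)
    in Hmon by (field; lra).
  replace (hvar q ^ 2 / q * (s ^ 2 * q)) with ((s * hvar q) ^ 2) in Hmon by (field; lra).
  apply Rsqr_incr_0_var; unfold Rsqr; nra.
Qed.

Theorem mainTheorem4 (alpha beta gamma delta : R) :
  0 <= alpha -> 0 <= beta -> 0 <= gamma -> 0 <= delta ->
  alpha + beta + gamma + delta = 1 ->
  0 < beta -> 0 < delta -> 0 < alpha + gamma ->
  let xi := alpha + beta in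
  let D := 4 * beta * delta + (2 * xi - 1) ^ 2 in
  let mu := (1 - sqrt D) / 2 in
  h mu >= h xi - (beta + delta) * h (beta / (beta + delta)).
Proof.
  intros Ha _ Hg _ Hsum Hb Hd _ xi D mu.
  set (q := alpha * gamma + alpha * delta + beta * gamma).
  set (s := beta + delta). set (p := beta / s).
  assert (Hq : 0 <= q) by (unfold q; nra).
  assert (Hxi : xi * (1 - xi) = q + beta * delta) by (unfold xi, q; nra).
  assert (HD : D = 1 - 4 * q) by (unfold D; nra).
  assert (Hmu : h mu = hvar q) by (unfold mu, hvar, half_root; rewrite HD; reflexivity).
  assert (Hxi4 : xi * (1 - xi) <= 1/4) by (pose proof (pow2_ge_0 (xi - 1/2)); nra).
  assert (Hbd : 0 <= beta * delta) by nra.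
  assert (Hps : p * s = beta) by (unfold p, s; field; lra).
  assert (Hp01 : 0 <= p <= 1) by (unfold s in Hps; nra).
  assert (Hp : beta * delta = s ^ 2 * (p * (1 - p))) by (unfold p, s; field; lra).
  assert (Hp4 : 0 <= p * (1 - p) <= 1/4)
    by (pose proof (pow2_ge_0 (p - 1/2)); split; [apply Rmult_le_pos|]; nra).
  pose proof (hvar_subadditive q (beta * delta) Hq Hbd ltac:(lra)) as Hsub.
  pose proof (hvar_scale s (p * (1 - p)) ltac:(unfold s; lra) Hp4) as Hscale.
  rewrite Hmu, (h_hvar xi), (h_hvar p Hp01), Hxi by (unfold xi; lra).
  rewrite Hp in Hsub |- *. lra.
Qed.
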